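(* For every collection $A$, the set of pure Nash equilibrium outcomes of the game $\Gamma_{\mathcal{CUDD}}(A)$ is exactly $AG(A)\cup DIS(A)$, where $$AG(A)=\Big\{a\in A:\ a_i\ge\tfrac{\overline{m}_i+\underline{m}_i}{2}\text{ for } i=1,2\Big\},\qquad DIS(A)=\Big\{\tfrac{b+c}{2}:\ b\in A^1_{max},\ c\in A^2_{max}\Big\}.$$
   Context: Two players bargain over a collection (multiset) $A=(a^k)_{k\in[n]}$, $a^k=(a^k_1,a^k_2)\in[0,1]^2$, $a^k_i$ being player $i$'s utility; players are risk neutral and the outcome of a profile is the vector of expected utilities. Mechanism $\mathcal{CUDD}$ (coordination with uniform dictatorial disagreement): each player $i$ submits a pair $(g_i,d_i)\in[n]^2$; if $g_1=g_2$ the chosen index is $g_1$, otherwise the index is uniform over $\{d_1,d_2\}$ (i.e., each of $d_1,d_2$ with probability $1/2$, so $d_1$ with probability 1 if $d_1=d_2$). $\overline{m}_i=\max_k a^k_i$, $\underline{m}_i=\min_k a^k_i$, and $A^i_{max}=\{a^k\in A: a^k_i=\overline{m}_i\}$. *)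

From HB Require Import structures.
From mathcomp Require Import all_boot all_order all_algebra.
Set Implicit Arguments. Unset Strict Implicit. Unset Printing Implicit Defensive.
Import Order.TTheory GRing.Theory Num.Theory.
Local Open Scope ring_scope.

Section CUDD.
Variables (R : realFieldType) (n : nat).
(* The collection A = (a^k)_{k in [n]} with n >= 1, indexed by 'I_n.+1;
   (a k).1 = a^k_1, (a k).2 = a^k_2. *)
Variable a : 'I_n.+1 -> R * R.

Definition strat := ('I_n.+1 * 'I_n.+1)%type.

(* Outcome (vector of expected utilities) of the profile (s1, s2) under CUDD. *)
Definition outcome (s1 s2 : strat) : R * R :=
  if s1.1 == s2.1 then a s1.1
  else (((a s1.2).1 + (a s2.2).1) / 2, ((a s1.2).2 + (a s2.2).2) / 2).

Definition is_pure_NE (s1 s2 : strat) : Prop :=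
  (forall t1 : strat, (outcome t1 s2).1 <= (outcome s1 s2).1) /\
  (forall t2 : strat, (outcome s1 t2).2 <= (outcome s1 s2).2).

Definition NE_outcome (x : R * R) : Prop :=
  exists s1 s2 : strat, is_pure_NE s1 s2 /\ outcome s1 s2 = x.

Definition mmax (f : 'I_n.+1 -> R) : R := \big[Num.max/f ord0]_k f k.
Definition mmin (f : 'I_n.+1 -> R) : R := \big[Num.min/f ord0]_k f k.
Definition mbar1 := mmax (fun k => (a k).1).
Definition mbar2 := mmax (fun k => (a k).2).
Definition mund1 := mmin (fun k => (a k).1).
Definition mund2 := mmin (fun k => (a k).2).

Definition in_Amax1 (k : 'I_n.+1) : Prop := (a k).1 = mbar1.
Definition in_Amax2 (k : 'I_n.+1) : Prop := (a k).2 = mbar2.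

Definition AG (x : R * R) : Prop :=
  exists k, x = a k /\ (mbar1 + mund1) / 2 <= (a k).1
                    /\ (mbar2 + mund2) / 2 <= (a k).2.

Definition DIS (x : R * R) : Prop :=
  exists k l, in_Amax1 k /\ in_Amax2 l /\
    x = (((a k).1 + (a l).1) / 2, ((a k).2 + (a l).2) / 2).

End CUDD.

(* A player can always break coordination by announcing a fresh coordination
   index together with a best alternative for herself, which secures the
   average of her maximum and of her utility for the opponent's dictatorial
   alternative.  When the players agree on [a^g], the opponent can announce
   a worst alternative, so the equilibrium condition becomes
   [a^g_i >= (mbar_i + mund_i) / 2]; when they disagree, each player must
   already announce a best alternative for herself, giving [DIS]. *)

From HB Require Import structures.
From mathcomp Require Import all_boot all_order all_algebra.
From mathcomp Require Import lra.
Set Implicit Arguments. Unset Strict Implicit. Unset Printing Implicit Defensive.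
Import Order.TTheory GRing.Theory Num.Theory.
Local Open Scope ring_scope.

Lemma big_selective_attained (T : Type) (I : finType) (op : T -> T -> T)
    (f : I -> T) (i0 : I) :
  (forall x y, op x y = x \/ op x y = y) -> exists k, f k = \big[op/f i0]_i f i.
Proof.
move=> op_sel; apply: (big_ind (fun y => exists k, f k = y)) => [|x y [i <-] [j <-]|i _].
- by exists i0.
- by case: (op_sel (f i) (f j)) => ->; [exists i | exists j].
- by exists i.
Qed.

Section Extrema.
Variables (R : realFieldType) (n : nat) (f : 'I_n.+1 -> R).

Lemma mmax_ub k : f k <= mmax f.
Proof. exact: le_bigmax. Qed.

Lemma mmin_lb k : mmin f <= f k.
Proof. exact: bigmin_le. Qed.

Lemma mmax_attained : exists k, f k = mmax f.
Proof. by apply: big_selective_attained => x y; case: leP; auto. Qed.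

Lemma mmin_attained : exists k, f k = mmin f.
Proof. by apply: big_selective_attained => x y; case: leP; auto. Qed.

End Extrema.

Section CUDDEquilibria.
Variables (R : realFieldType) (n : nat) (a : 'I_n.+1 -> R * R).

Lemma outcome_agree (s1 s2 : strat n) : s1.1 = s2.1 -> outcome a s1 s2 = a s1.1.
Proof. by move=> eq12; rewrite /outcome eq12 eqxx. Qed.

Lemma outcome_disagree (s1 s2 : strat n) : s1.1 != s2.1 ->
  outcome a s1 s2 =
    (((a s1.2).1 + (a s2.2).1) / 2, ((a s1.2).2 + (a s2.2).2) / 2).
Proof. by rewrite /outcome => /negbTE ->. Qed.

Lemma outcome_dictators (k l : 'I_n.+1) :
  outcome a (k, k) (l, l) =
    (((a k).1 + (a l).1) / 2, ((a k).2 + (a l).2) / 2).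
Proof.
case: (eqVneq k l) => [<-|neq_kl]; last exact: outcome_disagree.
by rewrite outcome_agree //; case: (a k) => u v /=; congr pair; lra.
Qed.

Lemma pure_NE_ge_mid1 (s1 s2 : strat n) (g : 'I_n.+1) :
  is_pure_NE a s1 s2 -> g != s2.1 ->
  (mbar1 a + (a s2.2).1) / 2 <= (outcome a s1 s2).1.
Proof.
move=> [dev1 _] neq_g; have [M1 aM1] : exists k, (a k).1 = mbar1 a := mmax_attained _.
by have := dev1 (g, M1); rewrite outcome_disagree //= aM1.
Qed.

Lemma pure_NE_ge_mid2 (s1 s2 : strat n) (g : 'I_n.+1) :
  is_pure_NE a s1 s2 -> g != s1.1 ->
  ((a s1.2).2 + mbar2 a) / 2 <= (outcome a s1 s2).2.
Proof.
move=> [_ dev2] neq_g; have [M2 aM2] : exists k, (a k).2 = mbar2 a := mmax_attained _.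
by have := dev2 (g, M2); rewrite outcome_disagree 1?eq_sym //= aM2.
Qed.

(* Deviating to the opponent's coordination index yields [a^{g_j}]; any other
   deviation yields at most the average of [mbar_i] and [a^{d_j}_i]. *)
Lemma pure_NE_of_bounds (s1 s2 : strat n) :
  (a s2.1).1 <= (outcome a s1 s2).1 ->
  (mbar1 a + (a s2.2).1) / 2 <= (outcome a s1 s2).1 ->
  (a s1.1).2 <= (outcome a s1 s2).2 ->
  ((a s1.2).2 + mbar2 a) / 2 <= (outcome a s1 s2).2 ->
  is_pure_NE a s1 s2.
Proof.
move=> agree1 mid1 agree2 mid2; split=> t.
- case: (eqVneq t.1 s2.1) => [eq_t|neq_t]; first by rewrite outcome_agree // eq_t.
  rewrite outcome_disagree //=; apply: le_trans mid1.
  by have : (a t.2).1 <= mbar1 a := mmax_ub _ _; lra.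
- case: (eqVneq s1.1 t.1) => [eq_t|neq_t]; first by rewrite outcome_agree.
  rewrite outcome_disagree //=; apply: le_trans mid2.
  by have : (a t.2).2 <= mbar2 a := mmax_ub _ _; lra.
Qed.

Lemma pure_NE_agree_AG (g d1 d2 : 'I_n.+1) :
  is_pure_NE a (g, d1) (g, d2) -> AG a (a g).
Proof.
move=> NE; exists g; split=> //.
have [/forallP only_g | /forallPn [g' neq_g']] := boolP [forall k, k == g].
  have [M1 <-] : exists k, (a k).1 = mbar1 a := mmax_attained _.
  have [M2 <-] : exists k, (a k).2 = mbar2 a := mmax_attained _.
  have [N1 <-] : exists k, (a k).1 = mund1 a := mmin_attained _.
  have [N2 <-] : exists k, (a k).2 = mund2 a := mmin_attained _.
  rewrite (eqP (only_g M1)) (eqP (only_g M2)) (eqP (only_g N1)) (eqP (only_g N2)).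
  by split; lra.
have := pure_NE_ge_mid1 NE neq_g'; have := pure_NE_ge_mid2 NE neq_g'.
rewrite outcome_agree //=.
have : mund1 a <= (a d2).1 := mmin_lb _ _.
have : mund2 a <= (a d1).2 := mmin_lb _ _.
by split; lra.
Qed.

Lemma pure_NE_disagree_DIS (s1 s2 : strat n) :
  s1.1 != s2.1 -> is_pure_NE a s1 s2 -> DIS a (outcome a s1 s2).
Proof.
move=> neq12 NE; exists s1.2, s2.2; rewrite outcome_disagree //; split; [|split=> //].
- have := pure_NE_ge_mid1 NE neq12; have : (a s1.2).1 <= mbar1 a := mmax_ub _ _.
  by rewrite outcome_disagree //= /in_Amax1; lra.
- rewrite eq_sym in neq12.
  have := pure_NE_ge_mid2 NE neq12; have : (a s2.2).2 <= mbar2 a := mmax_ub _ _.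
  by rewrite outcome_disagree 1?eq_sym //= /in_Amax2; lra.
Qed.

(* Each player announces the alternative that is worst for the opponent. *)
Lemma AG_pure_NE_outcome (x : R * R) : AG a x -> NE_outcome a x.
Proof.
move=> [k [-> [AG1 AG2]]].
have [N1 aN1] : exists k, (a k).1 = mund1 a := mmin_attained _.
have [N2 aN2] : exists k, (a k).2 = mund2 a := mmin_attained _.
exists (k, N2), (k, N1); rewrite outcome_agree //; split=> //.
by apply: pure_NE_of_bounds; rewrite outcome_agree //= ?aN1 ?aN2; lra.
Qed.

Lemma DIS_pure_NE_outcome (x : R * R) : DIS a x -> NE_outcome a x.
Proof.
move=> [k [l [max1k [max2l ->]]]]; rewrite /in_Amax1 /in_Amax2 in max1k max2l.
exists (k, k), (l, l); rewrite outcome_dictators; split=> //.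
have : (a l).1 <= mbar1 a := mmax_ub _ _.
have : (a k).2 <= mbar2 a := mmax_ub _ _.
by move=> *; apply: pure_NE_of_bounds; rewrite outcome_dictators /=; lra.
Qed.

End CUDDEquilibria.

Theorem proposition5 (R : realFieldType) (n : nat) (a : 'I_n.+1 -> R * R)
  (ha : forall k, 0 <= (a k).1 <= 1 /\ 0 <= (a k).2 <= 1) :
  forall x : R * R, NE_outcome a x <-> (AG a x \/ DIS a x).
Proof.
move=> x; split.
- move=> [[g1 d1] [[g2 d2] [NE <-]]].
  move: NE; case: (eqVneq g1 g2) => [<- NE|neq12 NE].
  + by left; rewrite outcome_agree //; exact: pure_NE_agree_AG NE.
  + by right; exact: pure_NE_disagree_DIS NE.
- by case=> [/AG_pure_NE_outcome | /DIS_pure_NE_outcome].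
Qed.
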